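(* Let $c(x,\bar y)=\frac{\langle x,y\rangle}{y_{n+1}}$ for $x\in\mathbb{R}^n$, $\bar y=(y,y_{n+1})\in\mathbb{S}^n_-$. (1) A subset $\Omega^*\subset\mathbb{S}^n_-$ is $c^*$-convex with respect to any $\Omega\subset\mathbb{R}^n$ if and only if it is a geodesically convex subset of $\mathbb{S}^n_-$. (2) A subset $\Omega\subset\mathbb{R}^n$ is $c$-convex with respect to any $\Omega^*\subset\mathbb{S}^n_-$ if and only if it is a convex subset of $\mathbb{R}^n$.
   Context: $\mathbb{S}^n_-=\{\bar y\in\mathbb{S}^n\mid y_{n+1}<0\}$. $\Omega^*$ is $c^*$-convex with respect to $\Omega$ if for every $x\in\Omega$ the set $-D_xc(x,\Omega^* )=\{-y/y_{n+1}\mid\bar y\in\Omega^*\}$ is a convex subset of $\mathbb{R}^n$. $\Omega$ is $c$-convex with respect to $\Omega^*$ if for every $\bar y\in\Omega^*$ the set $-D_{\bar y}c(\Omega,\bar y)$ is a convex subset of the tangent space $T_{\bar y}\mathbb{S}^n$. Geodesically convex means any two points of the set are joined by a minimizing great-circle arc lying in the set. *)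

From HB Require Import structures.
From mathcomp Require Import all_boot all_order all_algebra.
From mathcomp Require Import all_classical all_reals all_analysis.
Set Implicit Arguments. Unset Strict Implicit. Unset Printing Implicit Defensive.
Import Order.TTheory GRing.Theory Num.Theory.
Import numFieldNormedType.Exports.
Local Open Scope classical_set_scope.
Local Open Scope ring_scope.

Section Defs.
Variables (R : realType) (n : nat).

Definition dotv (k : nat) (u v : 'rV[R]_k) : R := \sum_(i < k) u 0 i * v 0 i.

Definition yfst (yb : 'rV[R]_n.+1) : 'rV[R]_n :=
  \row_(i < n) yb 0 (widen_ord (leqnSn n) i).
Definition ylast (yb : 'rV[R]_n.+1) : R := yb 0 ord_max.

Definition sphere : set 'rV[R]_n.+1 := [set yb | dotv yb yb = 1].
Definition lower_hemisphere : set 'rV[R]_n.+1 :=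
  [set yb | sphere yb /\ ylast yb < 0].

Definition cost (x : 'rV[R]_n) (yb : 'rV[R]_n.+1) : R :=
  dotv x (yfst yb) / ylast yb.

Definition egrad (k : nat) (f : 'rV[R]_k -> R) (p : 'rV[R]_k) : 'rV[R]_k :=
  \row_(j < k) ('D_(delta_mx 0 j) f p).

Definition Dx_cost (x : 'rV[R]_n) (yb : 'rV[R]_n.+1) : 'rV[R]_n :=
  egrad (fun x' => cost x' yb) x.

(* D_ybar c(x, ybar): Riemannian gradient on S^n of ybar |-> c(x, ybar),
   i.e. the tangential projection (onto T_ybar S^n = ybar^perp) of the
   Euclidean gradient of the ambient expression <x,y>/y_{n+1}. *)
Definition Dy_cost (x : 'rV[R]_n) (yb : 'rV[R]_n.+1) : 'rV[R]_n.+1 :=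
  let g := egrad (fun yb' => cost x yb') yb in g - (dotv g yb) *: yb.

Definition convex_rV (k : nat) (A : set 'rV[R]_k) : Prop :=
  forall a b, A a -> A b -> forall t : R, 0 <= t <= 1 ->
    A ((1 - t) *: a + t *: b).

Definition cstar_convex (Om : set 'rV[R]_n) (Os : set 'rV[R]_n.+1) : Prop :=
  forall x, Om x -> convex_rV [set - Dx_cost x yb | yb in Os].

(* Omega is c-convex w.r.t. Omega* (the sets lie in T_ybar S^n, a linear
   subspace of R^{n+1}; convexity in it is convexity in R^{n+1}) *)
Definition c_convex (Om : set 'rV[R]_n) (Os : set 'rV[R]_n.+1) : Prop :=
  forall yb, Os yb -> convex_rV [set - Dy_cost x yb | x in Om].

(* great circle through a with unit initial velocity u (u ⟂ a), arclength s *)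
Definition gcircle (a u : 'rV[R]_n.+1) (s : R) : 'rV[R]_n.+1 :=
  cos s *: a + sin s *: u.

Definition sdist (a b : 'rV[R]_n.+1) : R := acos (dotv a b).

(* geodesically convex: any two points are joined by a minimizing
   great-circle arc (length = spherical distance) lying in the set;
   for a = b the arc is the constant one. *)
Definition geod_convex (S : set 'rV[R]_n.+1) : Prop :=
  forall a b, S a -> S b ->
    a = b \/
    exists u : 'rV[R]_n.+1,
      [/\ dotv u u = 1, dotv u a = 0,
          gcircle a u (sdist a b) = b &
          forall s : R, 0 <= s <= sdist a b -> S (gcircle a u s)].

End Defs.

From HB Require Import structures.
From mathcomp Require Import all_boot all_order all_algebra.
From mathcomp Require Import all_classical all_reals all_analysis.
From mathcomp Require Import ring lra.
Import Order.TTheory GRing.Theory Num.Theory.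
Import numFieldNormedType.Exports.
Local Open Scope classical_set_scope.
Local Open Scope ring_scope.
Set Implicit Arguments. Unset Strict Implicit. Unset Printing Implicit Defensive.

(* -D_x c(x, ybar) = -y / y_{n+1} does not depend on x: it is the gnomonic
   (central) projection P of the lower hemisphere onto R^n, which sends great
   circles to lines.  For a <> b in the hemisphere, the minimizing arc from a
   to b is the set of unit vectors al a + be b with al, be >= 0, and P maps
   exactly these onto the segment [P a, P b]; hence Omega* is geodesically
   convex iff its image under P is convex.  For fixed ybar, the Euclidean
   gradient of ybar |-> c(x, ybar) is already tangent to the sphere, and
   -D_ybar c(x, ybar) = (-x / y_{n+1}, <x, y> / y_{n+1}^2) is an injective
   linear function of x, so it preserves and reflects convexity. *)

Lemma derive_along (R : realType) (V W : normedModType R)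
    (f : V -> W) (g : R -> W) (a v : V) :
  (forall h, f (h *: v + a) = g h) -> 'D_v f a = 'D_1 g 0.
Proof.
move=> fg; have fa : f a = g 0 by rewrite -fg scale0r add0r.
rewrite /derive fa.
suff -> : (fun h => h^-1 *: ((f \o shift a) (h *: v) - g 0)) =
          (fun h => h^-1 *: ((g \o shift 0) (h *: 1) - g 0)) by [].
by apply/funext => h /=; rewrite fg addr0 -[h *: 1]/(h * 1) mulr1.
Qed.

Section RealDerivatives.
Variable R : realType.

Lemma derive1_affine (p q x : R) : 'D_1 (fun h : R => p + h * q) x = q.
Proof.
rewrite deriveD //= derive_cst add0r deriveM // derive_id derive_cst scaler0.
by rewrite add0r; exact: mulr1.
Qed.

Lemma derive1_recip (K c : R) : c != 0 ->
  'D_1 (fun h : R => K / (c + h)) 0 = - K / c ^+ 2.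
Proof.
move=> c0; have c0' : c + 0 != 0 by rewrite addr0.
rewrite deriveM // derive_cst scaler0 addr0 deriveV // deriveD // derive_cst.
by rewrite derive_id add0r addr0 /GRing.scale /=; field; exact: c0.
Qed.

End RealDerivatives.

Section InnerProduct.
Variables (R : realType) (k : nat).
Implicit Types u v w : 'rV[R]_k.

Lemma dotvC u v : dotv u v = dotv v u.
Proof. by apply: eq_bigr => i _; rewrite mulrC. Qed.

Lemma dotvDl u v w : dotv (u + v) w = dotv u w + dotv v w.
Proof. by rewrite /dotv -big_split; apply: eq_bigr => i _; rewrite !mxE mulrDl. Qed.

Lemma dotvZl a u w : dotv (a *: u) w = a * dotv u w.
Proof. by rewrite /dotv mulr_sumr; apply: eq_bigr => i _; rewrite !mxE mulrA. Qed.

Lemma dotvNl u w : dotv (- u) w = - dotv u w.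
Proof. by rewrite -scaleN1r dotvZl mulN1r. Qed.

Lemma dotvDr u v w : dotv w (u + v) = dotv w u + dotv w v.
Proof. by rewrite dotvC dotvDl; congr (_ + _); apply: dotvC. Qed.

Lemma dotvZr a u w : dotv w (a *: u) = a * dotv w u.
Proof. by rewrite dotvC dotvZl dotvC. Qed.

Lemma dotvNr u w : dotv w (- u) = - dotv w u.
Proof. by rewrite dotvC dotvNl dotvC. Qed.

Lemma dotv_comb2 (al be ga de : R) u v :
  dotv (al *: u + be *: v) (ga *: u + de *: v) =
  al * ga * dotv u u + (al * de + be * ga) * dotv u v + be * de * dotv v v.
Proof. by rewrite !dotvDl !dotvDr !dotvZl !dotvZr (dotvC v u); ring. Qed.

Lemma dotv0l u : dotv 0 u = 0.
Proof. by rewrite -(scale0r 0) dotvZl mul0r. Qed.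

Lemma dotv_delta (j : 'I_k) u : dotv (delta_mx 0 j) u = u 0 j.
Proof.
rewrite /dotv (bigD1 j) //= big1 ?addr0; first by rewrite mxE !eqxx mul1r.
by move=> i /negPf ij; rewrite mxE ij andbF mul0r.
Qed.

Lemma dotv_ge0 u : 0 <= dotv u u.
Proof. by apply: sumr_ge0 => i _; rewrite -expr2 sqr_ge0. Qed.

Lemma dotv_eq0 u : dotv u u = 0 -> u = 0.
Proof.
move=> /eqP; rewrite psumr_eq0 => [/allP u0|i _]; last by rewrite -expr2 sqr_ge0.
apply/rowP => i; rewrite mxE; have := u0 i (mem_index_enum _).
by rewrite -expr2 sqrf_eq0 => /eqP.
Qed.

Lemma dotv_normalize w : w != 0 -> exists2 r : R, 0 < r & dotv (r *: w) (r *: w) = 1.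
Proof.
move=> w0; have ww : 0 < dotv w w.
  by rewrite lt_def dotv_ge0 andbT; apply: contra w0 => /eqP/dotv_eq0 ->.
exists (Num.sqrt (dotv w w))^-1; first by rewrite invr_gt0 sqrtr_gt0.
rewrite dotvZl dotvZr mulrA -expr2 exprVn sqr_sqrtr ?mulVf // ?gt_eqF //.
exact: ltW.
Qed.

End InnerProduct.

Section Coordinates.
Variables (R : realType) (n : nat).
Implicit Types a b : 'rV[R]_n.+1.

Lemma dotv_split a b : dotv a b = dotv (yfst a) (yfst b) + ylast a * ylast b.
Proof.
by rewrite /dotv big_ord_recr /=; congr (_ + _); apply: eq_bigr => i _; rewrite !mxE.
Qed.

Lemma yfstD a b : yfst (a + b) = yfst a + yfst b.
Proof. by apply/rowP => i; rewrite !mxE. Qed.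

Lemma yfstZ c a : yfst (c *: a) = c *: yfst a.
Proof. by apply/rowP => i; rewrite !mxE. Qed.

Lemma ylastD a b : ylast (a + b) = ylast a + ylast b.
Proof. by rewrite /ylast !mxE. Qed.

Lemma ylastZ c a : ylast (c *: a) = c * ylast a.
Proof. by rewrite /ylast !mxE. Qed.

Lemma yfstN a : yfst (- a) = - yfst a.
Proof. by apply/rowP => i; rewrite !mxE. Qed.

Lemma ylastN a : ylast (- a) = - ylast a.
Proof. by rewrite /ylast !mxE. Qed.

Lemma coord_ext a b : yfst a = yfst b -> ylast a = ylast b -> a = b.
Proof.
move=> eq_fst eq_last; apply/rowP => j; have [jn|] := ltnP j n.
  have := congr1 (fun v : 'rV[R]_n => v 0 (Ordinal jn)) eq_fst; rewrite !mxE.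
  by congr (a 0 _ = b 0 _); apply: val_inj.
move=> nj; have -> : j = ord_max by apply/val_inj/eqP; rewrite eqn_leq -ltnS ltn_ord.
exact: eq_last.
Qed.

Lemma yfst_delta_widen (i : 'I_n) :
  yfst (delta_mx 0 (widen_ord (leqnSn n) i) : 'rV[R]_n.+1) = delta_mx 0 i.
Proof. by apply/rowP => j; rewrite !mxE. Qed.

Lemma ylast_delta_widen (i : 'I_n) :
  ylast (delta_mx 0 (widen_ord (leqnSn n) i) : 'rV[R]_n.+1) = 0.
Proof.
rewrite /ylast mxE eqxx /=; case: eqP => [/(congr1 val)/= ni|//].
by have := ltn_ord i; rewrite -ni ltnn.
Qed.

Lemma yfst_delta_max : yfst (delta_mx 0 ord_max : 'rV[R]_n.+1) = 0.
Proof.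
apply/rowP => j; rewrite !mxE eqxx /=; case: eqP => [/(congr1 val)/= jn|//].
by have := ltn_ord j; rewrite jn ltnn.
Qed.

Lemma ylast_delta_max : ylast (delta_mx 0 ord_max : 'rV[R]_n.+1) = 1.
Proof. by rewrite /ylast mxE !eqxx. Qed.

End Coordinates.

Section CostDerivatives.
Variables (R : realType) (n : nat).
Implicit Types (x : 'rV[R]_n) (yb : 'rV[R]_n.+1).

Lemma Dx_costE x yb : Dx_cost x yb = (ylast yb)^-1 *: yfst yb.
Proof.
apply/rowP => j; rewrite /Dx_cost /egrad !mxE.
rewrite (@derive_along _ _ _ _ (fun h => cost x yb + h * ((ylast yb)^-1 * yfst yb 0 j))).
  by rewrite derive1_affine mxE.
by move=> h; rewrite /cost dotvDl dotvZl dotv_delta; ring.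
Qed.

Lemma yfst_egrad_cost x yb : ylast yb != 0 ->
  yfst (egrad (cost x) yb) = (ylast yb)^-1 *: x.
Proof.
move=> c0; apply/rowP => i; rewrite !mxE.
rewrite (@derive_along _ _ _ _ (fun h => cost x yb + h * (x 0 i / ylast yb))).
  by rewrite derive1_affine mulrC.
move=> h; rewrite /cost yfstD ylastD yfstZ ylastZ yfst_delta_widen.
by rewrite ylast_delta_widen mulr0 add0r dotvDr dotvZr dotvC dotv_delta; ring.
Qed.

Lemma ylast_egrad_cost x yb : ylast yb != 0 ->
  ylast (egrad (cost x) yb) = - dotv x (yfst yb) / ylast yb ^+ 2.
Proof.
move=> c0; rewrite [in LHS]/ylast mxE.
rewrite (@derive_along _ _ _ _ (fun h => dotv x (yfst yb) / (ylast yb + h))).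
  exact: derive1_recip.
move=> h; rewrite /cost yfstD ylastD yfstZ ylastZ yfst_delta_max ylast_delta_max.
by rewrite scaler0 add0r mulr1 addrC.
Qed.

Lemma Dy_costE x yb : ylast yb != 0 -> Dy_cost x yb = egrad (cost x) yb.
Proof.
move=> c0; rewrite /Dy_cost dotv_split yfst_egrad_cost // ylast_egrad_cost //.
rewrite dotvZl dotvC [X in _ - X *: _](_ : _ = 0) ?scale0r ?subr0 //.
by field.
Qed.

End CostDerivatives.

Section GreatCircleArc.
Variables (R : realType) (n : nat) (a u b : 'rV[R]_n.+1) (th : R).
Hypotheses (a_unit : dotv a a = 1) (u_unit : dotv u u = 1) (u_perp : dotv u a = 0).
Hypotheses (th_gt0 : 0 < th) (th_ltpi : th < pi) (arc_end : gcircle a u th = b).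

Let sin_th_gt0 : 0 < sin th. Proof. by apply: sin_gt0_pi; rewrite th_gt0. Qed.

Let sin_ge0_arc s : 0 <= s <= th -> 0 <= sin s.
Proof. by case/andP=> s_ge0 s_leth; rewrite sin_ge0_pi // s_ge0 (le_trans s_leth) ?ltW. Qed.

Lemma gcircle_unit (s : R) : dotv (gcircle a u s) (gcircle a u s) = 1.
Proof.
rewrite /gcircle dotv_comb2 a_unit u_unit dotvC u_perp.
by rewrite mulr0 addr0 !mulr1 -!expr2 cos2Dsin2.
Qed.

Lemma gcircle_cone (s : R) : 0 <= s <= th ->
  exists al be : R, [/\ 0 <= al, 0 <= be & gcircle a u s = al *: a + be *: b].
Proof.
move=> /andP[s_ge0 s_leth].
exists (sin (th - s) / sin th), (sin s / sin th); split.
- by rewrite divr_ge0 ?(ltW sin_th_gt0) // sin_ge0_arc // subr_ge0 s_leth gerBl.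
- by rewrite divr_ge0 ?(ltW sin_th_gt0) // sin_ge0_arc // s_ge0 s_leth.
apply/rowP => j; rewrite -arc_end !mxE sinB.
by field; rewrite gt_eqF.
Qed.
Lemma cone_gcircle (al be : R) : 0 <= al -> 0 <= be ->
  dotv (al *: a + be *: b) (al *: a + be *: b) = 1 ->
  exists2 s, 0 <= s <= th & al *: a + be *: b = gcircle a u s.
Proof.
move=> al_ge0 be_ge0; set p := al + be * cos th; set q := be * sin th.
have -> : al *: a + be *: b = p *: a + q *: u.
  by apply/rowP => j; rewrite -arc_end /gcircle /p /q !mxE; ring.
rewrite dotv_comb2 a_unit u_unit dotvC u_perp => pq1.
have q_ge0 : 0 <= q by rewrite mulr_ge0 // ltW.
have p_bound : -1 <= p <= 1 by apply/andP; split; nra.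
have cos_s : cos (acos p) = p by rewrite acosK // in_itv.
have sin_s : sin (acos p) = q.
  by rewrite sin_acos // (_ : 1 - p ^+ 2 = q ^+ 2) ?sqrtr_sqr ?ger0_norm //; lra.
exists (acos p); last by rewrite /gcircle cos_s sin_s.
rewrite acos_ge0 //= leNgt; apply/negP => th_lt_s.
(* sin (th - acos p) = al * sin th >= 0, while th - acos p lies in (- pi, 0). *)
have : 0 < sin (acos p - th).
  apply: sin_gt0_pi; rewrite subr_gt0 th_lt_s ltrBlDl /=.
  by rewrite (le_lt_trans (acos_lepi p_bound)) // ltrDr.
rewrite -opprB sinN sinB cos_s sin_s oppr_gt0.
have -> : sin th * p - cos th * q = al * sin th by rewrite /p /q; ring.
by rewrite ltNge mulr_ge0 // ltW.
Qed.

End GreatCircleArc.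

Section Gnomonic.
Variables (R : realType) (n : nat).
Local Notation LH := (@lower_hemisphere R n).
Implicit Types (a b w : 'rV[R]_n.+1).

Definition gnomonic (yb : 'rV[R]_n.+1) : 'rV[R]_n := - (ylast yb)^-1 *: yfst yb.

Lemma Dx_cost_gnomonic (x : 'rV[R]_n) : (fun yb => - Dx_cost x yb) = gnomonic.
Proof. by apply/funext => yb; rewrite Dx_costE /gnomonic scaleNr. Qed.

Lemma yfst_gnomonic w : ylast w != 0 -> yfst w = - ylast w *: gnomonic w.
Proof. by move=> w0; rewrite /gnomonic scalerA mulrN mulNr divff // opprK scale1r. Qed.

Lemma gnomonicZ (c : R) w : c != 0 -> gnomonic (c *: w) = gnomonic w.
Proof.
move=> c0; rewrite /gnomonic yfstZ ylastZ scalerA invfM mulNr mulrAC mulVf //.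
by rewrite mul1r.
Qed.

Lemma gnomonic_comb a b (al be : R) :
  ylast a != 0 -> ylast b != 0 -> ylast (al *: a + be *: b) != 0 ->
  let t := be * ylast b / ylast (al *: a + be *: b) in
  gnomonic (al *: a + be *: b) = (1 - t) *: gnomonic a + t *: gnomonic b.
Proof.
rewrite ylastD !ylastZ => a0 b0 g0 t.
apply/rowP => j; rewrite /t /gnomonic yfstD !yfstZ ylastD !ylastZ !mxE.
by field; rewrite ?a0 ?b0 ?g0.
Qed.

Lemma LH_ylast_neq0 a : LH a -> ylast a != 0.
Proof. by case=> _ /lt_eqF ->. Qed.

Lemma gnomonic_inj a b : LH a -> LH b -> gnomonic a = gnomonic b -> a = b.
Proof.
move=> La Lb Pab; have [a0 b0] := (LH_ylast_neq0 La, LH_ylast_neq0 Lb).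
case: La Lb => [Sa a_lt0] [Sb b_lt0].
move: Sa Sb; rewrite /sphere /= !dotv_split (yfst_gnomonic a0) (yfst_gnomonic b0) Pab.
rewrite !dotvZl !dotvZr => Sa Sb; have := dotv_ge0 (gnomonic b) => PP_ge0.
have ab_last : ylast a = ylast b by nra.
by apply: coord_ext; rewrite // (yfst_gnomonic a0) (yfst_gnomonic b0) Pab ab_last.
Qed.

Lemma LH_dotv_bounds a b : LH a -> LH b -> a != b -> -1 < dotv a b < 1.
Proof.
move=> [Sa a_lt0] [Sb b_lt0] ab; rewrite /sphere /= in Sa Sb.
apply/andP; split; rewrite ltNge; apply/negP => ab_bound.
- have : dotv (a + b) (a + b) = 0.
    apply/le_anti; rewrite dotv_ge0 andbT.
    by rewrite dotvDl !dotvDr Sa Sb (dotvC b a); lra.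
  move=> /dotv_eq0 /(congr1 (@ylast R n)); rewrite ylastD /ylast mxE => ab_last.
  by move: a_lt0 b_lt0; rewrite /ylast; lra.
- have : dotv (a - b) (a - b) = 0.
    apply/le_anti; rewrite dotv_ge0 andbT.
    by rewrite dotvDl !dotvDr !dotvNl !dotvNr Sa Sb (dotvC b a); lra.
  by move=> /dotv_eq0 /eqP; rewrite subr_eq0 (negPf ab).
Qed.

Lemma LH_sdist a b : LH a -> LH b -> a != b ->
  0 < sdist a b < pi /\ cos (sdist a b) = dotv a b.
Proof.
move=> La Lb ab; have /andP[k_gtN1 k_lt1] := LH_dotv_bounds La Lb ab.
split; last by rewrite /sdist acosK // in_itv /= !ltW.
by rewrite /sdist acos_gt0 ?acos_ltpi ?k_gtN1 ?k_lt1 ?(ltW k_gtN1) ?(ltW k_lt1).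
Qed.

Lemma LH_arc a b : LH a -> LH b -> a != b ->
  exists u, [/\ dotv u u = 1, dotv u a = 0 & gcircle a u (sdist a b) = b].
Proof.
move=> La Lb ab; have [/andP[th_gt0 th_ltpi] cos_th] := LH_sdist La Lb ab.
case: La Lb => [Sa _] [Sb _]; rewrite /sphere /= in Sa Sb.
set th := sdist a b in th_gt0 th_ltpi cos_th *; set k := dotv a b in cos_th *.
have st0 : sin th != 0 by rewrite gt_eqF // sin_gt0_pi ?th_gt0.
have sin2 : sin th ^+ 2 = 1 - k ^+ 2 by rewrite sin2cos2 cos_th.
exists ((- k / sin th) *: a + (sin th)^-1 *: b); split.
- rewrite dotv_comb2 Sa Sb -/k.
  transitivity ((1 - k ^+ 2) / sin th ^+ 2); first by field.
  by rewrite -sin2 divff // expf_neq0.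
- by rewrite dotvDl !dotvZl Sa (dotvC b a) -/k; field.
- by apply/rowP => j; rewrite /gcircle !mxE cos_th; field.
Qed.

Lemma LH_cone a b (al be : R) : LH a -> LH b -> 0 <= al -> 0 <= be ->
  dotv (al *: a + be *: b) (al *: a + be *: b) = 1 -> LH (al *: a + be *: b).
Proof.
move=> [_ a_lt0] [_ b_lt0] al_ge0 be_ge0 g_unit; split => //.
have g_neq0 : al *: a + be *: b != 0.
  by apply/eqP => g0; move: g_unit; rewrite g0 dotv0l => /eqP; rewrite eq_sym oner_eq0.
rewrite ltNge ylastD !ylastZ; apply: contra g_neq0 => g_last_ge0.
have [al0 be0] : al = 0 /\ be = 0 by split; nra.
by rewrite al0 be0 !scale0r addr0.
Qed.

Lemma gnomonic_cone_segment a b (al be : R) : LH a -> LH b -> 0 <= al -> 0 <= be ->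
  LH (al *: a + be *: b) ->
  exists2 t, 0 <= t <= 1 &
    gnomonic (al *: a + be *: b) = (1 - t) *: gnomonic a + t *: gnomonic b.
Proof.
move=> La Lb al_ge0 be_ge0 Lg.
exists (be * ylast b / ylast (al *: a + be *: b));
  last exact: (gnomonic_comb (LH_ylast_neq0 La) (LH_ylast_neq0 Lb) (LH_ylast_neq0 Lg)).
case: La Lb Lg => [_ a_lt0] [_ b_lt0] [_]; rewrite ylastD !ylastZ => g_lt0.
have al_a_le0 := mulr_ge0_le0 al_ge0 (ltW a_lt0).
have be_b_le0 := mulr_ge0_le0 be_ge0 (ltW b_lt0).
rewrite ler_ndivrMr // mul1r mulr_le0 ?invr_le0 ?(ltW g_lt0) //=; lra.
Qed.

Lemma segment_gnomonic_cone a b (t : R) : LH a -> LH b -> 0 <= t <= 1 ->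
  exists al be : R, [/\ 0 <= al, 0 <= be,
    dotv (al *: a + be *: b) (al *: a + be *: b) = 1 &
    gnomonic (al *: a + be *: b) = (1 - t) *: gnomonic a + t *: gnomonic b].
Proof.
move=> [_ a_lt0] [_ b_lt0] /andP[t_ge0 t_le1].
have [a0 b0] : ylast a != 0 /\ ylast b != 0 by rewrite !lt_eqF.
(* [mu *: a + nu *: b] has last coordinate -1, so its projection is just its
   first n coordinates, [(1 - t) *: gnomonic a + t *: gnomonic b]. *)
set mu := (1 - t) / - ylast a; set nu := t / - ylast b.
have mu_ge0 : 0 <= mu by rewrite divr_ge0 ?subr_ge0 // oppr_ge0 ltW.
have nu_ge0 : 0 <= nu by rewrite divr_ge0 // oppr_ge0 ltW.
have w_last : ylast (mu *: a + nu *: b) = -1.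
  by rewrite ylastD !ylastZ /mu /nu; field; rewrite a0 b0.
have w_neq0 : mu *: a + nu *: b != 0.
  apply/eqP => w0; move: w_last; rewrite w0 /ylast mxE => /eqP.
  by rewrite eq_sym oppr_eq0 oner_eq0.
have [r r_gt0 g_unit] := dotv_normalize w_neq0.
exists (r * mu), (r * nu); rewrite -!(scalerA r) -scalerDr.
split; [exact: mulr_ge0 (ltW r_gt0) mu_ge0 | exact: mulr_ge0 (ltW r_gt0) nu_ge0 | by [] |].
rewrite gnomonicZ ?gt_eqF // gnomonic_comb ?w_last ?oppr_eq0 ?oner_eq0 //=.
by rewrite (_ : nu * ylast b / -1 = t) // /nu; field.
Qed.

Lemma geod_convex_gnomonic (Os : set 'rV[R]_n.+1) : Os `<=` LH ->
  geod_convex Os <-> convex_rV [set gnomonic yb | yb in Os].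
Proof.
move=> Os_LH; split => [geodOs | convP].
  move=> _ _ [a Oa <-] [b Ob <-] t t01.
  have [<- | ab] := eqVneq a b; first by exists a => //; rewrite -scalerDl subrK scale1r.
  have [La Lb] := (Os_LH a Oa, Os_LH b Ob).
  have [/andP[th_gt0 th_ltpi] _] := LH_sdist La Lb ab.
  have [al [be [al_ge0 be_ge0 g_unit <-]]] := segment_gnomonic_cone La Lb t01.
  case: (geodOs a b Oa Ob) => [abE | [u [u_unit u_perp arc_end arc_in]]].
    by rewrite abE eqxx in ab.
  have [s s_range ->] :=
    cone_gcircle La.1 u_unit u_perp th_gt0 th_ltpi arc_end al_ge0 be_ge0 g_unit.
  by exists (gcircle a u s); first exact: arc_in.
move=> a b Oa Ob; have [La Lb] := (Os_LH a Oa, Os_LH b Ob).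
have [-> | ab] := eqVneq a b; [by left | right].
have [/andP[th_gt0 th_ltpi] _] := LH_sdist La Lb ab.
have [u [u_unit u_perp arc_end]] := LH_arc La Lb ab.
exists u; split => // s s_range.
have [al [be [al_ge0 be_ge0 gE]]] := gcircle_cone th_gt0 th_ltpi arc_end s_range.
have Lg : LH (al *: a + be *: b).
  by apply: LH_cone; rewrite // -gE (gcircle_unit La.1 u_unit u_perp).
have [t t01 Pg] := gnomonic_cone_segment La Lb al_ge0 be_ge0 Lg.
have [z Oz Pz] := convP _ _ (imageP gnomonic Oa) (imageP gnomonic Ob) t t01.
by rewrite gE -(gnomonic_inj (Os_LH z Oz) Lg (etrans Pz (esym Pg))).
Qed.

End Gnomonic.

Lemma cstar_convexE (R : realType) (n : nat) (Om : set 'rV[R]_n) (Os : set 'rV[R]_n.+1) :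
  Om !=set0 -> cstar_convex Om Os <-> convex_rV [set gnomonic yb | yb in Os].
Proof.
move=> [x0 Om_x0]; rewrite /cstar_convex.
split => [/(_ x0 Om_x0) | convP x _]; by rewrite Dx_cost_gnomonic.
Qed.

Lemma convex_rV_image (R : realType) (k m : nat) (f : 'rV[R]_k -> 'rV[R]_m)
    (A : set 'rV[R]_k) :
  (forall a b t, f ((1 - t) *: a + t *: b) = (1 - t) *: f a + t *: f b) ->
  injective f -> convex_rV [set f x | x in A] <-> convex_rV A.
Proof.
move=> f_comb f_inj; split => [convfA a b Aa Ab t t01 | convA].
  have [z Az fz] := convfA _ _ (imageP f Aa) (imageP f Ab) t t01.
  by rewrite -(f_inj _ _ (etrans fz (esym (f_comb a b t)))).
move=> _ _ [a Aa <-] [b Ab <-] t t01.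
by exists ((1 - t) *: a + t *: b); [exact: convA | exact: f_comb].
Qed.

Section CoordinateLinearMaps.
Variables (R : realType) (n : nat) (g : 'rV[R]_n -> 'rV[R]_n.+1) (c d : R) (w : 'rV[R]_n).
Hypothesis yfst_g : forall x, yfst (g x) = c *: x.
Hypothesis ylast_g : forall x, ylast (g x) = dotv x w * d.

Lemma coord_linear_comb x x' t : g ((1 - t) *: x + t *: x') = (1 - t) *: g x + t *: g x'.
Proof.
apply: coord_ext.
  by rewrite yfstD !yfstZ !yfst_g; apply/rowP => i; rewrite !mxE; ring.
by rewrite ylastD !ylastZ !ylast_g dotvDl !dotvZl; ring.
Qed.

Lemma coord_linear_inj : c != 0 -> injective g.
Proof. by move=> c0 x x' /(congr1 (@yfst R n)); rewrite !yfst_g => /scalerI; apply. Qed.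

End CoordinateLinearMaps.

Section TangentGradient.
Variables (R : realType) (n : nat) (yb : 'rV[R]_n.+1).
Hypothesis ylast_neq0 : ylast yb != 0.

Lemma yfst_Dy_cost x : yfst (- Dy_cost x yb) = - (ylast yb)^-1 *: x.
Proof. by rewrite yfstN Dy_costE // yfst_egrad_cost // scaleNr. Qed.

Lemma ylast_Dy_cost x : ylast (- Dy_cost x yb) = dotv x (yfst yb) / ylast yb ^+ 2.
Proof. by rewrite ylastN Dy_costE // ylast_egrad_cost // mulNr opprK. Qed.

End TangentGradient.

Lemma c_convexE (R : realType) (n : nat) (Om : set 'rV[R]_n) (Os : set 'rV[R]_n.+1) :
  Os !=set0 -> Os `<=` @lower_hemisphere R n -> (c_convex Om Os <-> convex_rV Om).
Proof.
move=> [y0 Os_y0] Os_LH.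
have convE yb : Os yb -> convex_rV [set - Dy_cost x yb | x in Om] <-> convex_rV Om.
  move=> /Os_LH/LH_ylast_neq0 c0; apply: convex_rV_image.
    exact: coord_linear_comb (yfst_Dy_cost c0) (ylast_Dy_cost c0).
  by apply: coord_linear_inj (yfst_Dy_cost c0) _; rewrite oppr_eq0 invr_eq0.
by split => [/(_ y0 Os_y0)/(convE _ Os_y0) | convOm yb /convE ->].
Qed.

Theorem proposition4p6 (R : realType) (n : nat) :
  (forall (Om : set 'rV[R]_n) (Os : set 'rV[R]_n.+1),
      Om !=set0 -> Os `<=` @lower_hemisphere R n ->
      (cstar_convex Om Os <-> geod_convex Os)) /\
  (forall (Om : set 'rV[R]_n) (Os : set 'rV[R]_n.+1),
      Os !=set0 -> Os `<=` @lower_hemisphere R n ->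
      (c_convex Om Os <-> convex_rV Om)).
Proof.
split; last exact: c_convexE.
by move=> Om Os Om0 Os_LH; rewrite cstar_convexE // geod_convex_gnomonic.
Qed.
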